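(* Consider the protocol with state set $Q=\{L_1,L_2,N\}$ and (symmetric, deterministic) rules $L_1L_2\to L_1N$, $L_2L_1\to NL_1$, $L_1N\to NL_2$, $NL_1\to L_2N$, $L_2N\to NL_1$, $NL_2\to L_1N$, $NN\to NN$, $L_1L_1\to L_2L_2$, $L_2L_2\to L_1L_1$. This protocol is Pavlovian (it is the protocol associated to the payoff matrix with rows (player) and columns (opponent) ordered $L_1,L_2,N$: row $L_1$: $(-3,0,-3)$; row $L_2$: $(-1,-3,-3)$; row $N$: $(-2,-3,0)$), and it solves the leader election problem for populations of size at least $3$: for every $n\ge 3$, every configuration $C_0$ of $n$ agents containing at least one agent in state $L_1$ or $L_2$, and every fair execution starting from $C_0$, there is a time after which every configuration contains exactly one agent in a state of $\{L_1,L_2\}$.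
   Context: A population protocol has a finite state set $Q$ and a transition relation $\delta\subseteq Q^4$; we write $q_1q_2\to q_1'q_2'$ for $(q_1,q_2,q_1',q_2')\in\delta$. A configuration of $n\ge2$ agents is a multiset of $n$ elements of $Q$. We write $C\to C'$ if $C'$ is obtained from $C$ by choosing two of its elements (two distinct agents) in states $q_1,q_2$ and replacing them by $q_1',q_2'$ for some $(q_1,q_2,q_1',q_2')\in\delta$. An execution from $C_0$ is an infinite sequence $C_0,C_1,\dots$ with $C_i\to C_{i+1}$ for all $i$. It is fair if for every configuration $C$ occurring infinitely often and every $C'$ with $C\to C'$, $C'$ also occurs infinitely often. A symmetric game on $Q$ is a real matrix $M=(M_{q,r})_{q,r\in Q}$ ($M_{q,r}$ = payoff of playing $q$ against $r$). For $q',y\in Q$, $BR_{\neq q'}(y)$ is the set of $x\in Q\setminus\{q'\}$ with $M_{z,y}\le M_{x,y}$ for all $z\in Q\setminus\{q'\}$. The transition relation associated to $M$ consists of exactly those $(q_1,q_2,q_1',q_2')$ with: $q_1'=q_1$ if $M_{q_1,q_2}\ge0$, $q_1'\in BR_{\neq q_1}(q_2)$ if $M_{q_1,q_2}<0$; $q_2'=q_2$ if $M_{q_2,q_1}\ge0$, $q_2'\in BR_{\neq q_2}(q_1)$ if $M_{q_2,q_1}<0$. A population protocol is Pavlovian if $\delta$ equals the transition relation associated to some real matrix indexed by $Q\times Q$. *)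

From HB Require Import structures.
From mathcomp Require Import all_boot all_order all_algebra.
Set Implicit Arguments. Unset Strict Implicit. Unset Printing Implicit Defensive.
Import Order.TTheory GRing.Theory Num.Theory.

(* A transition relation delta ⊆ Q^4; [delta q1 q2 q1' q2'] means q1 q2 -> q1' q2'. *)
Definition trans_rel (Q : finType) := Q -> Q -> Q -> Q -> Prop.

Definition config (Q : finType) := {ffun Q -> nat}.

Definition csize (Q : finType) (C : config Q) : nat := (\sum_(q : Q) C q)%N.

(* C -> C' : two distinct agents in states q1, q2 of C are replaced by q1', q2'. *)
Definition step (Q : finType) (delta : trans_rel Q) (C C' : config Q) : Prop :=
  exists q1 q2 q1' q2' : Q,
    delta q1 q2 q1' q2' /\
    (q1 == q2 -> 2 <= C q1)%N /\ (q1 != q2 -> 1 <= C q1 /\ 1 <= C q2)%N /\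
    C' = [ffun q => (C q - (q == q1) - (q == q2) + (q == q1') + (q == q2'))%N].

Definition execution (Q : finType) (delta : trans_rel Q) (C0 : config Q)
    (e : nat -> config Q) : Prop :=
  e 0%N = C0 /\ forall i, step delta (e i) (e i.+1).

Definition inf_often (Q : finType) (e : nat -> config Q) (C : config Q) : Prop :=
  forall i, exists j, (i <= j)%N /\ e j = C.

Definition fair (Q : finType) (delta : trans_rel Q) (e : nat -> config Q) : Prop :=
  forall C C', inf_often e C -> step delta C C' -> inf_often e C'.

Definition BR (Q : finType) (R : realDomainType) (M : Q -> Q -> R) (q' y x : Q) : Prop :=
  x != q' /\ forall z : Q, z != q' -> (M z y <= M x y)%R.

Definition assoc_rel (Q : finType) (R : realDomainType) (M : Q -> Q -> R) : trans_rel Q :=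
  fun q1 q2 q1' q2' =>
    (if (0 <= M q1 q2)%R then q1' = q1 else BR M q1 q2 q1') /\
    (if (0 <= M q2 q1)%R then q2' = q2 else BR M q2 q1 q2').

Definition pavlovian (Q : finType) (R : realDomainType) (delta : trans_rel Q) : Prop :=
  exists M : Q -> Q -> R, forall q1 q2 q1' q2', delta q1 q2 q1' q2' <-> assoc_rel M q1 q2 q1' q2'.

Inductive st := L1 | L2 | Nn.

Definition st_to_ord (s : st) : 'I_3 :=
  match s with L1 => inord 0 | L2 => inord 1 | Nn => inord 2 end.
Definition ord_to_st (i : 'I_3) : st :=
  match val i with 0 => L1 | 1 => L2 | _ => Nn end.
Lemma st_ordK : cancel st_to_ord ord_to_st.
Proof. by case; rewrite /ord_to_st /= inordK. Qed.

HB.instance Definition _ := Finite.copy st (can_type st_ordK).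

Definition le_delta : trans_rel st :=
  fun q1 q2 q1' q2' =>
    match q1, q2 with
    | L1, L2 => (q1', q2') = (L1, Nn)
    | L2, L1 => (q1', q2') = (Nn, L1)
    | L1, Nn => (q1', q2') = (Nn, L2)
    | Nn, L1 => (q1', q2') = (L2, Nn)
    | L2, Nn => (q1', q2') = (Nn, L1)
    | Nn, L2 => (q1', q2') = (L1, Nn)
    | Nn, Nn => (q1', q2') = (Nn, Nn)
    | L1, L1 => (q1', q2') = (L2, L2)
    | L2, L2 => (q1', q2') = (L1, L1)
    end.

(* The payoff matrix (row = player, column = opponent), order L1, L2, N. *)
Definition le_payoff (R : realDomainType) (q r : st) : R :=
  (match q, r with
  | L1, L1 => - 3%:R | L1, L2 => 0 | L1, Nn => - 3%:R
  | L2, L1 => - 1 | L2, L2 => - 3%:R | L2, Nn => - 3%:R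
  | Nn, L1 => - 2%:R | Nn, L2 => - 3%:R | Nn, Nn => 0
  end)%R.

Definition leaders (C : config st) : nat := (C L1 + C L2)%N.

From HB Require Import structures.
From mathcomp Require Import all_boot all_order all_algebra zify.
From Stdlib Require Import Relations Classical.
Set Implicit Arguments. Unset Strict Implicit.
Import GRing.Theory Num.Theory.

(* Pavlovian part: all payoffs are integers, so comparisons of payoffs over any
   real field reduce to comparisons in int, where the associated transition
   relation of [le_payoff] can be compared with [le_delta] by evaluation.

   Leader election is an instance of a general principle about fair executions
   of any population protocol: a nonnegative integer potential that never
   increases along steps eventually stabilises; since configurations of a fixed
   size form a finite set, some configuration C recurs infinitely often after
   stabilisation, and by fairness so does every configuration reachable from C;
   hence the potential is constant on everything reachable from C
   ([fair_potential_stabilizes]).  For our protocol the potential is the number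
   of leaders: it never increases, it never drops from 1 to 0, and from any
   configuration of at least 3 agents with 2 or more leaders one can reach a
   configuration with fewer leaders ([reach_fewer_leaders]).  So the stable
   value is exactly 1. *)

(* A nonincreasing sequence of natural numbers is eventually constant
   (classical: where it stabilises is not computable). *)
Lemma nonincreasing_stabilizes (f : nat -> nat) :
  (forall i j, (i <= j)%N -> (f j <= f i)%N) ->
  exists T, forall t, (T <= t)%N -> f t = f T.
Proof.
move=> f_noninc.
suff stab_from : forall v T, (f T <= v)%N -> exists T', forall t, (T' <= t)%N -> f t = f T'.
  exact: (stab_from (f 0%N) 0%N (leqnn _)).
elim=> [|v IHv] T fT_le.
  by exists T => t /f_noninc; lia.
have [stable|] := classic (forall t, (T <= t)%N -> f t = f T); first by exists T.
move=> /not_all_ex_not [t] /(@imply_to_and (T <= t)%N) [le_Tt neq_t].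
by apply: (IHv t); have := f_noninc _ _ le_Tt; lia.
Qed.

Lemma recurrent_value (T : finType) (f : nat -> T) :
  exists x, forall i, exists j, (i <= j)%N /\ f j = x.
Proof.
apply: NNPP => no_recurrent.
have eventually_avoided x : exists i, forall j, (i <= j)%N -> f j <> x.
  apply: NNPP => x_recurrent; apply: no_recurrent; exists x => i.
  apply: NNPP => no_hit; apply: x_recurrent; exists i => j le_ij fj_x.
  by apply: no_hit; exists j.
have [bound avoid] := fin_all_exists eventually_avoided.
pose N := (\max_(x : T) bound x)%N.
by apply: (avoid (f N) N) => //; apply: leq_bigmax.
Qed.

Section FairExecutions.

Variables (Q : finType) (delta : trans_rel Q).

Lemma sum_indicator (x : Q) : (\sum_(q : Q) (q == x) = 1)%N.
Proof. by rewrite (bigD1 x) //= eqxx big1 // => q /negbTE ->. Qed.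

Definition interact (C : config Q) (q1 q2 q1' q2' : Q) : config Q :=
  [ffun q => (C q - (q == q1) - (q == q2) + (q == q1') + (q == q2'))%N].

(* Every step is an interaction of two agents present in C, counted with
   multiplicity (so the truncated subtractions in [interact] are exact). *)
Lemma step_enabled (C C' : config Q) : step delta C C' ->
  exists q1 q2 q1' q2', [/\ delta q1 q2 q1' q2',
    forall q, ((q == q1) + (q == q2) <= C q)%N & C' = interact C q1 q2 q1' q2'].
Proof.
move=> [q1 [q2 [q1' [q2' [delta_q [same_st [diff_st ->]]]]]]].
exists q1, q2, q1', q2'; split => // q.
case: (eqVneq q q1) => [->|ne1]; case: (eqVneq q1 q2) => [eq12|ne12].
- by apply: same_st; rewrite eq12.
- by case: (diff_st ne12).
- by rewrite -eq12 (negbTE ne1).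
- by case: eqP => [->|//]; case: (diff_st ne12).
Qed.

Lemma step_csize (C C' : config Q) : step delta C C' -> csize C' = csize C.
Proof.
move=> /step_enabled [q1 [q2 [q1' [q2' [_ enabled ->]]]]].
rewrite /csize; under eq_bigr do rewrite ffunE -subnDA.
rewrite !big_split /= !sum_indicator -addnA.
rewrite -[X in _ = X](eq_bigr _ (fun q _ => subnK (enabled q))) big_split /=.
by rewrite big_split /= !sum_indicator.
Qed.

Lemma execution_invariant (P : config Q -> Prop) (C0 : config Q) (e : nat -> config Q) :
  execution delta C0 e -> (forall C C', step delta C C' -> P C -> P C') ->
  P C0 -> forall t, P (e t).
Proof. by move=> [e0 e_step] P_step P0; elim=> [|t IHt]; [rewrite e0 | apply: P_step IHt]. Qed.

Lemma execution_nonincreasing (f : config Q -> nat) (C0 : config Q) (e : nat -> config Q) :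
  execution delta C0 e -> (forall C C', step delta C C' -> (f C' <= f C)%N) ->
  forall i j, (i <= j)%N -> (f (e j) <= f (e i))%N.
Proof.
move=> [_ e_step] f_step i j /subnK <-; elim: (j - i)%N => [|d IHd] //.
by rewrite addSn (leq_trans (f_step _ _ (e_step _))).
Qed.

Definition reachable : relation (config Q) := clos_refl_trans (config Q) (step delta).

Lemma interact_reach (C : config Q) (q1 q2 q1' q2' : Q) :
  delta q1 q2 q1' q2' ->
  (q1 == q2 -> 2 <= C q1)%N -> (q1 != q2 -> 1 <= C q1 /\ 1 <= C q2)%N ->
  reachable C (interact C q1 q2 q1' q2').
Proof. by move=> *; apply: rt_step; exists q1, q2, q1', q2'. Qed.

Lemma fair_reachable (e : nat -> config Q) (C C' : config Q) :
  fair delta e -> inf_often e C -> reachable C C' -> inf_often e C'.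
Proof. by move=> fair_e C_rec reach; elim: reach C_rec => // *; [apply: fair_e | auto]. Qed.

Lemma config_le_csize (C : config Q) (q : Q) : (C q <= csize C)%N.
Proof. by rewrite /csize (bigD1 q) //= leq_addr. Qed.

(* Configurations of size n, encoded as elements of a finite type. *)
Definition config_code (n : nat) (C : config Q) : {ffun Q -> 'I_n.+1} :=
  [ffun q => inord (C q)].

Lemma config_code_inj (n : nat) (C D : config Q) :
  csize C = n -> csize D = n -> config_code n C = config_code n D -> C = D.
Proof.
move=> sizeC sizeD /ffunP same_code; apply/ffunP => q.
have [boundC boundD] : (C q < n.+1)%N /\ (D q < n.+1)%N.
  by rewrite !ltnS -{1}sizeC -sizeD !config_le_csize.
by move: (same_code q); rewrite !ffunE => /(congr1 (@nat_of_ord _)); rewrite !inordK.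
Qed.

Lemma recurrent_config (n : nat) (e : nat -> config Q) :
  (forall t, csize (e t) = n) -> exists C, inf_often e C.
Proof.
move=> size_e; have [k k_rec] := recurrent_value (fun t => config_code n (e t)).
have [j0 [_ code_j0]] := k_rec 0%N.
exists (e j0) => i; have [j [le_ij code_j]] := k_rec i; exists j; split => //.
by apply: (config_code_inj (size_e j) (size_e j0)); rewrite code_j code_j0.
Qed.

Theorem fair_potential_stabilizes (f : config Q -> nat) (C0 : config Q) (e : nat -> config Q) :
  execution delta C0 e -> fair delta e ->
  (forall C C', step delta C C' -> (f C' <= f C)%N) ->
  exists T, (forall t, (T <= t)%N -> f (e t) = f (e T)) /\
    exists C, csize C = csize C0 /\ f C = f (e T) /\
      forall C', reachable C C' -> f C' = f C.
Proof.
move=> exec_e fair_e f_step.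
have [T stable] := nonincreasing_stabilizes (execution_nonincreasing exec_e f_step).
have size_e : forall t, csize (e t) = csize C0.
  apply: (execution_invariant (P := fun C => csize C = csize C0) exec_e) => //.
  by move=> C C' /step_csize ->.
have [C C_rec] := recurrent_config size_e.
have late D : inf_often e D -> f D = f (e T).
  by move=> /(_ T) [j [le_Tj <-]]; apply: stable.
exists T; split => //; exists C; split; last split.
- by have [j [_ <-]] := C_rec 0%N.
- exact: late.
- by move=> C' /(fair_reachable fair_e C_rec) /late ->; rewrite late.
Qed.

End FairExecutions.

(* A computable equality on states, to evaluate agent counts of concrete
   interactions. *)
Definition st_eqb (a b : st) : bool :=
  match a, b with L1, L1 | L2, L2 | Nn, Nn => true | _, _ => false end.

Lemma st_eqE (a b : st) : (a == b) = st_eqb a b.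
Proof. by case: a; case: b => //=; apply/eqP. Qed.

Lemma csize_st (C : config st) : csize C = (C L1 + C L2 + C Nn)%N.
Proof.
rewrite /csize (bigD1 L1) // (bigD1 L2) ?st_eqE // (bigD1 Nn) ?st_eqE // big_pred0 => [|[]];
  by rewrite ?st_eqE //= addn0 !addnA.
Qed.

(* Linear arithmetic on agent counts; [simpl in *] first unifies the two
   syntactic forms in which the state type occurs in count terms [C q]. *)
Ltac count_arith := simpl in *; lia.

(* Only the interaction L1 L2 (in either order) changes the number of
   leaders, removing exactly one of at least two. *)
Lemma step_leaders (C C' : config st) : step le_delta C C' ->
  leaders C' = leaders C \/ (leaders C' + 1 = leaders C /\ 2 <= leaders C)%N.
Proof.
move=> /step_enabled [q1 [q2 [q1' [q2' [delta_q enabled ->]]]]].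
have := enabled L1; have := enabled L2; rewrite /leaders !ffunE; clear enabled.
by move: q1 q2 delta_q => [] [] /= [-> ->]; rewrite !st_eqE /=; count_arith.
Qed.

(* With only L1 leaders (at least two) and at least three agents, both leader
   states can be made present: L1 L1 -> L2 L2, then, if no L1 is left,
   L2 N -> N L1. *)
Lemma reach_mixed_from_L1 (C : config st) :
  C L2 = 0%N -> (2 <= C L1)%N -> (3 <= csize C)%N ->
  exists C', [/\ reachable le_delta C C', leaders C' = leaders C,
                 1 <= C' L1 & 1 <= C' L2]%N.
Proof.
rewrite csize_st => noL2 twoL1 size3.
pose C1 := interact C L1 L1 L2 L2.
have reach1 : reachable le_delta C C1.
  by apply: interact_reach; rewrite ?st_eqE //= => _; count_arith.
have [threeL1|exactly2] : (3 <= C L1 \/ C L1 = 2)%N by lia.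
  by exists C1; split => //; rewrite /C1 /leaders !ffunE !st_eqE /=; count_arith.
pose C2 := interact C1 L2 Nn Nn L1.
have reach2 : reachable le_delta C1 C2.
  by apply: interact_reach => //; rewrite /C1 !ffunE !st_eqE //= => _; count_arith.
exists C2; split; first exact: (rt_trans _ _ _ _ _ reach1 reach2).
all: by rewrite /C2 /C1 /leaders !ffunE !st_eqE /=; count_arith.
Qed.

(* Symmetrically: L2 L2 -> L1 L1, then, if no L2 is left, L1 N -> N L2. *)
Lemma reach_mixed_from_L2 (C : config st) :
  C L1 = 0%N -> (2 <= C L2)%N -> (3 <= csize C)%N ->
  exists C', [/\ reachable le_delta C C', leaders C' = leaders C,
                 1 <= C' L1 & 1 <= C' L2]%N.
Proof.
rewrite csize_st => noL1 twoL2 size3.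
pose C1 := interact C L2 L2 L1 L1.
have reach1 : reachable le_delta C C1.
  by apply: interact_reach; rewrite ?st_eqE //= => _; count_arith.
have [threeL2|exactly2] : (3 <= C L2 \/ C L2 = 2)%N by lia.
  by exists C1; split => //; rewrite /C1 /leaders !ffunE !st_eqE /=; count_arith.
pose C2 := interact C1 L1 Nn Nn L2.
have reach2 : reachable le_delta C1 C2.
  by apply: interact_reach => //; rewrite /C1 !ffunE !st_eqE //= => _; count_arith.
exists C2; split; first exact: (rt_trans _ _ _ _ _ reach1 reach2).
all: by rewrite /C2 /C1 /leaders !ffunE !st_eqE /=; count_arith.
Qed.

Lemma reach_mixed_leaders (C : config st) :
  (2 <= leaders C)%N -> (3 <= csize C)%N ->
  exists C', [/\ reachable le_delta C C', leaders C' = leaders C,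
                 1 <= C' L1 & 1 <= C' L2]%N.
Proof.
rewrite /leaders => two_leaders size3.
have [[oneL1 oneL2]|[[noL2 twoL1]|[noL1 twoL2]]] :
    ((1 <= C L1 /\ 1 <= C L2) \/ (C L2 = 0 /\ 2 <= C L1) \/ (C L1 = 0 /\ 2 <= C L2))%N.
  by count_arith.
- by exists C; split => //; apply: rt_refl.
- exact: reach_mixed_from_L1.
- exact: reach_mixed_from_L2.
Qed.

Lemma reach_fewer_leaders (C : config st) :
  (2 <= leaders C)%N -> (3 <= csize C)%N ->
  exists C', reachable le_delta C C' /\ (leaders C' < leaders C)%N.
Proof.
move=> two_leaders size3.
have [C1 [reach1 same_leaders oneL1 oneL2]] := reach_mixed_leaders two_leaders size3.
exists (interact C1 L1 L2 L1 Nn); split.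
  apply: (rt_trans _ _ _ _ _ reach1).
  by apply: interact_reach; rewrite ?st_eqE.
by rewrite -same_leaders /leaders !ffunE !st_eqE /=; count_arith.
Qed.

Theorem le_leader_election (n : nat) (C0 : config st) (e : nat -> config st) :
  (3 <= n)%N -> csize C0 = n -> (1 <= leaders C0)%N ->
  execution le_delta C0 e -> fair le_delta e ->
  exists T : nat, forall t : nat, (T <= t)%N -> leaders (e t) = 1%N.
Proof.
move=> size3 size0 leader0 exec_e fair_e.
have leaders_noninc C C' : step le_delta C C' -> (leaders C' <= leaders C)%N.
  by move/step_leaders; lia.
have some_leader : forall t, (1 <= leaders (e t))%N.
  apply: (execution_invariant (P := fun C => (1 <= leaders C)%N) exec_e) => //.
  by move=> C C' /step_leaders; lia.
have [T [stable [C [sizeC [leadersC terminal]]]]] :=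
  fair_potential_stabilizes exec_e fair_e leaders_noninc.
have not_two : ~ (2 <= leaders C)%N.
  have sizeC3 : (3 <= csize C)%N by rewrite sizeC size0.
  move=> two_leaders; have [C' [/terminal ->]] := reach_fewer_leaders two_leaders sizeC3.
  by rewrite ltnn.
exists T => t le_Tt; rewrite stable //; have := some_leader T; lia.
Qed.

Local Open Scope ring_scope.

Lemma BR_st (R : realDomainType) (M : st -> st -> R) (q' y x : st) :
  BR M q' y x <-> [/\ x != q', L1 != q' -> M L1 y <= M x y,
    L2 != q' -> M L2 y <= M x y & Nn != q' -> M Nn y <= M x y].
Proof.
split=> [[x_ne best] | [x_ne best_L1 best_L2 best_Nn]]; first by split; try apply: best.
by split=> // -[].
Qed.

Lemma le_payoff_int (R : realFieldType) (q r : st) :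
  le_payoff R q r = (le_payoff int q r)%:~R.
Proof. by case: q; case: r; rewrite /= ?rmorphN ?rmorph0 ?rmorph1 //= ?intz ?mulrz_nat. Qed.

Lemma assoc_rel_int (R : realFieldType) (q1 q2 q1' q2' : st) :
  assoc_rel (@le_payoff R) q1 q2 q1' q2' <-> assoc_rel (@le_payoff int) q1 q2 q1' q2'.
Proof.
have BR_int q' y x : BR (@le_payoff R) q' y x <-> BR (@le_payoff int) q' y x.
  by rewrite /BR; split=> -[x_ne best]; split=> // z /best; rewrite !le_payoff_int ler_int.
by rewrite /assoc_rel !(le_payoff_int R) !ler0z; case: ifP; case: ifP; rewrite ?BR_int.
Qed.

(* Over int, the associated relation is computed and compared with [le_delta]
   on all 81 quadruples of states. *)
Lemma le_delta_assoc_int (q1 q2 q1' q2' : st) :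
  le_delta q1 q2 q1' q2' <-> assoc_rel (@le_payoff int) q1 q2 q1' q2'.
Proof.
rewrite /assoc_rel; case: ifP => payoff1; case: ifP => payoff2; rewrite ?BR_st.
all: move: payoff1 payoff2; case: q1; case: q2; case: q1'; case: q2'.
all: by rewrite /= ?st_eqE; vm_compute; firstorder congruence.
Qed.

Lemma le_delta_assoc (R : realFieldType) (q1 q2 q1' q2' : st) :
  le_delta q1 q2 q1' q2' <-> assoc_rel (@le_payoff R) q1 q2 q1' q2'.
Proof. by rewrite assoc_rel_int; apply: le_delta_assoc_int. Qed.

Local Close Scope ring_scope.

Theorem mainTheorem5 :
  (forall R : realFieldType,
     pavlovian R le_delta /\
     (forall q1 q2 q1' q2',
        le_delta q1 q2 q1' q2' <-> assoc_rel (@le_payoff R) q1 q2 q1' q2')) /\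
  (forall (n : nat) (C0 : config st) (e : nat -> config st),
     (3 <= n)%N -> csize C0 = n -> (1 <= leaders C0)%N ->
     execution le_delta C0 e -> fair le_delta e ->
     exists T : nat, forall t : nat, (T <= t)%N -> leaders (e t) = 1%N).
Proof.
split; last exact: le_leader_election.
move=> R; split; last exact: le_delta_assoc.
by exists (@le_payoff R); apply: le_delta_assoc.
Qed.
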